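(* Let $R$ be a commutative ring with identity and $M$ an $R$-module. If $M$ satisfies the dual of strong Property $\mathcal{A}$, then $W_R(M)$ is an ideal of $R$ (i.e. $M$ is secondal). Conversely, if $R$ is a principal ideal domain and $M$ is a secondal $R$-module, then $M$ satisfies the dual of strong Property $\mathcal{A}$.
   Context: All rings are commutative with identity. For an $R$-module $M$, $W_R(M)=\{r\in R : rM\neq M\}$. A proper submodule $L$ of $M$ is completely irreducible if whenever $L=\bigcap_{i\in I}L_i$ for a family $\{L_i\}_{i\in I}$ of submodules of $M$, then $L=L_i$ for some $i$. An $R$-module $M$ satisfies the dual of strong Property $\mathcal{A}$ if for any $a_1,\dots,a_n\in W_R(M)$ there exists a completely irreducible submodule $L$ of $M$ with $a_iM\subseteq L\neq M$ for all $i=1,\dots,n$. A nonzero $R$-module (or submodule) $N$ is secondal if $W_R(N)$ is an ideal of $R$. *)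

From HB Require Import structures.
From mathcomp Require Import all_boot all_order all_algebra.
Set Implicit Arguments. Unset Strict Implicit. Unset Printing Implicit Defensive.
Import GRing.Theory.
Local Open Scope ring_scope.

Definition submodule (R : comNzRingType) (M : lmodType R) (N : M -> Prop) : Prop :=
  [/\ N 0,
      (forall x y, N x -> N y -> N (x + y)) &
      (forall (r : R) x, N x -> N (r *: x))].

Definition W (R : comNzRingType) (M : lmodType R) (r : R) : Prop :=
  ~ (forall m : M, exists m' : M, m = r *: m').

Definition ideal (R : comNzRingType) (I : R -> Prop) : Prop :=
  [/\ I 0,
      (forall a b, I a -> I b -> I (a + b)) &
      (forall r a, I a -> I (r * a))].

Definition PID (R : idomainType) : Prop :=
  forall I : R -> Prop, ideal I -> exists a : R, forall x, I x <-> exists r, x = r * a.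

Definition completely_irreducible (R : comNzRingType) (M : lmodType R)
  (L : M -> Prop) : Prop :=
  [/\ submodule L,
      (exists m : M, ~ L m) &
      (forall (I : Type) (Li : I -> M -> Prop),
          (forall i, submodule (Li i)) ->
          (forall x, L x <-> (forall i, Li i x)) ->
          exists i, forall x, Li i x <-> L x)].

(* Dual of strong Property A (n >= 1 elements a_1..a_n, indexed by 'I_n.+1). *)
Definition dual_strong_A (R : comNzRingType) (M : lmodType R) : Prop :=
  forall (n : nat) (a : 'I_n.+1 -> R),
    (forall i, W M (a i)) ->
    exists L : M -> Prop,
      completely_irreducible L /\ (forall i (m : M), L (a i *: m)).

Definition secondal (R : comNzRingType) (M : lmodType R) : Prop :=
  (exists m : M, m != 0) /\ ideal (W M).

From mathcomp Require Import all_boot all_order all_algebra.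
From mathcomp Require Import boolp classical_sets.
Set Implicit Arguments.
Unset Strict Implicit.
Unset Printing Implicit Defensive.
Import GRing.Theory.
Local Open Scope ring_scope.
Local Open Scope classical_set_scope.

(* If a and b lie in W(M), a completely irreducible proper L contains aM and bM,
   hence (a + b)M, so a + b lies in W(M); closure under multiplication holds in any
   module. Conversely, over a PID the ideal generated by a_1, ..., a_n in the ideal
   W(M) is principal, say (d), and d lies in W(M), so dM misses some m0. By Zorn, a
   submodule containing dM that is maximal among those avoiding m0 exists, and any
   such submodule is completely irreducible: in an intersection equal to it, some
   member avoids m0 and so, by maximality, equals it. It contains every a_i M. *)

Section Submodules.
Variables (R : comNzRingType) (M : lmodType R).

Lemma submodule_bigcup_chain {I : Type} {D : set I} {F : I -> M -> Prop} :
  (exists i, D i) -> (forall i, D i -> submodule (F i)) ->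
  (forall i j, D i -> D j -> F i `<=` F j \/ F j `<=` F i) ->
  submodule (\bigcup_(i in D) F i).
Proof.
move=> [i0 Di0] subF chainF; split.
- by exists i0 => //; have [] := subF i0 Di0.
- move=> x y [i Di Fix] [j Dj Fjy].
  have [Fij|Fji] := chainF i j Di Dj.
  + by exists j => //; have [_ FD _] := subF j Dj; apply: FD => //; apply: Fij.
  + by exists i => //; have [_ FD _] := subF i Di; apply: FD => //; apply: Fji.
- by move=> r x [i Di Fix]; exists i => //; have [_ _ FZ] := subF i Di; apply: FZ.
Qed.

Lemma submodule_scale_image (d : R) : submodule (fun x : M => exists m, x = d *: m).
Proof.
split.
- by exists 0; rewrite scaler0.
- by move=> _ _ [u ->] [v ->]; exists (u + v); rewrite scalerDr.
- by move=> r _ [u ->]; exists (r *: u); rewrite !scalerA mulrC.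
Qed.

Lemma completely_irreducible_maximal_avoiding (L : M -> Prop) (m0 : M) :
  submodule L -> ~ L m0 ->
  (forall B, submodule B -> L `<=` B -> ~ B m0 -> B `<=` L) ->
  completely_irreducible L.
Proof.
move=> subL Lm0 maxL; split=> //; first by exists m0.
move=> I Li subLi defL.
have [i Lim0] : exists i, ~ Li i m0.
  by apply/existsNP => Lm; apply/Lm0/defL.
have LLi : L `<=` Li i by move=> x /defL; apply.
by exists i => x; split; [apply: maxL | apply: LLi].
Qed.

Lemma ex_maximal_avoiding (N : M -> Prop) (m0 : M) :
  submodule N -> ~ N m0 ->
  exists L, [/\ submodule L, N `<=` L, ~ L m0 &
    forall B, submodule B -> L `<=` B -> ~ B m0 -> B `<=` L].
Proof.
move=> subN Nm0.
pose T := {A : set M | [/\ submodule A, N `<=` A & ~ A m0]}.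
pose N0 : T := exist _ N (And3 subN (@subset_refl _ N) Nm0).
pose le (A B : T) := `[< sval A `<=` sval B >].
have [||C chainC|] := ZL_preorder N0 (R := le).
- by move=> A; apply/asboolP.
- move=> A B C /asboolP AB /asboolP BC; apply/asboolP; exact: subset_trans BC.
- have [[A0 CA0]|noC] := pselect (exists A, C A); last first.
    by exists N0 => A CA; case: noC; exists A.
  have chain : forall A B, C A -> C B -> sval A `<=` sval B \/ sval B `<=` sval A.
    by move=> A B CA CB; case: (chainC A B CA CB) => /asboolP; [left|right].
  have subC : forall A, C A -> submodule (sval A) by move=> [A []].
  have subU := submodule_bigcup_chain (ex_intro _ A0 CA0) subC chain.
  have NU : N `<=` \bigcup_(A in C) sval A.
    by move=> x Nx; exists A0 => //; case: (svalP A0) => _ + _; apply.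
  have Um0 : ~ (\bigcup_(A in C) sval A) m0.
    by move=> [A _ Am0]; case: (svalP A) => _ _ /(_ Am0).
  exists (exist _ (\bigcup_(A in C) sval A) (And3 subU NU Um0)) => A CA.
  by apply/asboolP; apply: bigcup_sup.
- move=> [L [subL NL Lm0]] maxL; exists L; split=> // B subB LB Bm0.
  have NB : N `<=` B by apply: subset_trans LB.
  by apply/asboolP/(maxL (exist _ B (And3 subB NB Bm0))); apply/asboolP.
Qed.

Lemma ex_completely_irreducible_sup (N : M -> Prop) (m0 : M) :
  submodule N -> ~ N m0 -> exists L, completely_irreducible L /\ N `<=` L.
Proof.
move=> subN Nm0; have [L [subL NL Lm0 maxL]] := ex_maximal_avoiding subN Nm0.
by exists L; split=> //; apply: completely_irreducible_maximal_avoiding maxL.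
Qed.

End Submodules.

Section SecondalFromDualStrongA.
Variables (R : comNzRingType) (M : lmodType R).

Lemma W0 : (exists m : M, m != 0) -> W M 0.
Proof. by move=> [m m_neq0] /(_ m) [m' m_eq]; rewrite m_eq scale0r eqxx in m_neq0. Qed.

Lemma W_mull (r a : R) : W M a -> W M (r * a).
Proof.
move=> Wa raM; apply: Wa => m; have [m' ->] := raM m.
by exists (r *: m'); rewrite scalerA mulrC.
Qed.

Lemma W_of_proper_superset (L : M -> Prop) (a : R) :
  (exists m, ~ L m) -> (forall m, L (a *: m)) -> W M a.
Proof. by move=> [m Lm] aML aM; apply: Lm; have [m' ->] := aM m. Qed.

Lemma W_add_dual_strong_A (a b : R) :
  dual_strong_A M -> W M a -> W M b -> W M (a + b).
Proof.
move=> dsA Wa Wb.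
pose ab (i : 'I_2) := if i == ord0 then a else b.
have [|L [[subL properL _] abL]] := dsA 1%N ab; first by move=> i; rewrite /ab; case: ifP.
apply: (W_of_proper_superset properL) => m; rewrite scalerDl.
case: subL => _ LD _; apply: LD; [exact: (abL ord0) | exact: (abL ord_max)].
Qed.

Lemma secondal_dual_strong_A :
  (exists m : M, m != 0) -> dual_strong_A M -> secondal M.
Proof.
move=> M_neq0 dsA; split=> //; split; first exact: W0.
- by move=> a b; apply: W_add_dual_strong_A.
- by move=> r a; apply: W_mull.
Qed.

End SecondalFromDualStrongA.

Section IdealSpan.
Variables (R : comNzRingType) (n : nat) (a : 'I_n -> R).

Definition ideal_span (x : R) := exists c : 'I_n -> R, x = \sum_i c i * a i.

Lemma ideal_ideal_span : ideal ideal_span.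
Proof.
split.
- by exists (fun=> 0); rewrite big1 // => i _; rewrite mul0r.
- move=> _ _ [c ->] [c' ->]; exists (fun i => c i + c' i).
  by rewrite -big_split; apply: eq_bigr => i _; rewrite mulrDl.
- move=> r _ [c ->]; exists (fun i => r * c i).
  by rewrite mulr_sumr; apply: eq_bigr => i _; rewrite mulrA.
Qed.

Lemma ideal_span_gen (i : 'I_n) : ideal_span (a i).
Proof.
exists (fun j => (j == i)%:R); rewrite (bigD1 i) //= eqxx mul1r big1 ?addr0 //.
by move=> j /negbTE ->; rewrite mul0r.
Qed.

Lemma ideal_span_sub (J : R -> Prop) :
  ideal J -> (forall i, J (a i)) -> ideal_span `<=` J.
Proof.
move=> [J0 JD JM] Ja _ [c ->].
by apply: (big_ind J J0 JD) => i _; apply: JM.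
Qed.

End IdealSpan.

Lemma dual_strong_A_secondal (R : idomainType) (M : lmodType R) :
  PID R -> secondal M -> dual_strong_A M.
Proof.
move=> pidR [_ idealW] n a Wa.
have [d spanE] := pidR _ (ideal_ideal_span a).
have Wd : W M d.
  by apply: (ideal_span_sub idealW Wa); apply/spanE; exists 1; rewrite mul1r.
have [m0 dMm0] : exists m0 : M, ~ exists m, m0 = d *: m by apply/existsNP.
have [L [ciL dML]] := ex_completely_irreducible_sup (submodule_scale_image M d) dMm0.
exists L; split=> // i m; apply: dML.
have [r ->] := (spanE (a i)).1 (ideal_span_gen a i).
by exists (r *: m); rewrite scalerA mulrC.
Qed.

Theorem theorem2p5 :
  (forall (R : comNzRingType) (M : lmodType R),
      (exists m : M, m != 0%R) -> dual_strong_A M -> secondal M) /\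
  (forall (R : idomainType) (M : lmodType R),
      PID R -> secondal M -> dual_strong_A M).
Proof.
split; [exact: secondal_dual_strong_A | exact: dual_strong_A_secondal].
Qed.
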